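(* Let $R$ be a commutative ring in which $2$ is invertible and let $Q$ be a free $R$-module of rank $n$ with a fixed ordered basis. Let $\varphi'$ and $\varphi^*$ be invertible symmetric $n\times n$ matrices defining quadratic forms on $Q$ (giving quadratic spaces $Q_{\varphi'}$, $Q_{\varphi^*}$), with $\varphi'=\epsilon^t\varphi^*\epsilon$ for some $\epsilon\in\mathrm{GL}_n(R)$. Let $m\ge1$ and identify automorphisms of $Q\perp\mathbb{H}(R)^m$ with $(n+2m)\times(n+2m)$ matrices via the basis of $Q$ followed by $x_1,\dots,x_m,f_1,\dots,f_m$. Then $\mathrm{EO}_R(Q_{\varphi'},\mathbb{H}(R)^m)=(\epsilon^{-1}\perp I_{2m})\,\mathrm{EO}_R(Q_{\varphi^*},\mathbb{H}(R)^m)\,(\epsilon\perp I_{2m})$.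
   Context: For an invertible symmetric matrix $\varphi$ on $Q$, $\langle a,b\rangle_\varphi=a^t\varphi b$ in coordinates and $q_\varphi(a)=\tfrac12\langle a,a\rangle_\varphi$. $\mathbb{H}(R)^m=\mathbb{H}(P)$ with $P=R^m$, $\mathbb{H}(P)=P\oplus P^*$, basis $x_1,\dots,x_m$ of $P$, dual basis $f_1,\dots,f_m$, form $q(y,g)=g(y)$. DSER transformations on $Q_\varphi\perp\mathbb{H}(P)$: for $R$-linear $\alpha:Q\to P$ let $\alpha^*:P^*\to Q$ satisfy $\langle\alpha^*(g),z\rangle_\varphi=g(\alpha(z))$ for all $z$, and $E_\alpha(z,y,g)=(z-\alpha^*(g),y+\alpha(z)-\tfrac12\alpha\alpha^*(g),g)$; for $\beta:Q\to P^*$ let $\beta^*:P\to Q$ satisfy $\langle\beta^*(y),z\rangle_\varphi=\beta(z)(y)$, and $E^*_\beta(z,y,g)=(z-\beta^*(y),y,g+\beta(z)-\tfrac12\beta\beta^*(y))$. $\mathrm{EO}_R(Q_\varphi,\mathbb{H}(P))$ is the group generated by all $E_\alpha,E^*_\beta$. *)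

From mathcomp Require Import all_boot all_order all_algebra.
Set Implicit Arguments. Unset Strict Implicit. Unset Printing Implicit Defensive.
Import GRing.Theory.
Local Open Scope ring_scope.

(* Coordinates on Q ⊥ H(R)^m: column vectors of size n + (m + m),
   ordered as (z ; y ; g) with z in Q = R^n (the fixed basis), y in P = R^m
   (basis x_1..x_m), g in P^* (dual basis f_1..f_m).  A linear map acts by
   left multiplication M *m v. *)

Section DSER.
Variables (R : comUnitRingType) (n m : nat).

(* alpha : Q -> P given by A : 'M_(m,n) (y = A z); its adjoint
   alpha^* : P^* -> Q, characterised by <alpha^* g, z>_phi = g(alpha z) = g^T A z,
   is the matrix phi^-1 A^T (phi invertible symmetric). *)
Definition adjQ (phi : 'M[R]_n) (A : 'M[R]_(m, n)) : 'M[R]_(n, m) :=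
  invmx phi *m A^T.

(* E_alpha(z,y,g) = (z - alpha^* g, y + alpha z - 1/2 alpha alpha^* g, g) *)
Definition E_alpha (phi : 'M[R]_n) (A : 'M[R]_(m, n)) : 'M[R]_(n + (m + m)) :=
  block_mx 1%:M (row_mx 0 (- adjQ phi A))
           (col_mx A 0)
           (block_mx 1%:M (- ((2%:R)^-1 *: (A *m adjQ phi A))) 0 1%:M).

(* beta : Q -> P^* given by B : 'M_(m,n) (coordinates of beta z are B z, so
   beta(z)(y) = y^T B z); beta^* : P -> Q with <beta^* y, z>_phi = beta(z)(y).
   E*_beta(z,y,g) = (z - beta^* y, y, g + beta z - 1/2 beta beta^* y) *)
Definition E_beta (phi : 'M[R]_n) (B : 'M[R]_(m, n)) : 'M[R]_(n + (m + m)) :=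
  block_mx 1%:M (row_mx (- adjQ phi B) 0)
           (col_mx 0 B)
           (block_mx 1%:M 0 (- ((2%:R)^-1 *: (B *m adjQ phi B))) 1%:M).

Definition DSER_gen (phi : 'M[R]_n) (M : 'M[R]_(n + (m + m))) : Prop :=
  (exists A, M = E_alpha phi A) \/ (exists B, M = E_beta phi B).

Inductive EO (phi : 'M[R]_n) : 'M[R]_(n + (m + m)) -> Prop :=
| EO_one : EO phi 1%:M
| EO_mul G M : DSER_gen phi G -> EO phi M -> EO phi (G *m M)
| EO_mulV G M : DSER_gen phi G -> EO phi M -> EO phi (invmx G *m M).

End DSER.

Definition perpI (R : comUnitRingType) (n m : nat) (e : 'M[R]_n)
  : 'M[R]_(n + (m + m)) := block_mx e 0 0 1%:M.

From mathcomp Require Import all_boot all_order all_algebra.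
Import GRing.Theory.
Local Open Scope ring_scope.
Set Implicit Arguments. Unset Strict Implicit. Unset Printing Implicit Defensive.

(* If [phi = e^T psi e], the [phi]-adjoint of [alpha e] is [e^-1] times the
   [psi]-adjoint of [alpha].  Hence conjugating the DSER generator of [alpha]
   (resp. [beta]) for [psi] by [e ⊥ I_2m] yields the DSER generator of
   [alpha e] (resp. [beta e]) for [phi].  Conjugation is a group automorphism,
   so it maps EO for [psi] into EO for [phi]; the converse inclusion is the
   same argument for [e^-1], since [psi = (e^-1)^T phi e^-1]. *)

Section MatrixInverse.
Variables (R : comUnitRingType) (k : nat).

Lemma invmxM (A B : 'M[R]_k) : A \in unitmx -> B \in unitmx ->
  invmx (A *m B) = invmx B *m invmx A.
Proof.
move=> uA uB; have uAB : A *m B \in unitmx by rewrite unitmx_mul uA uB.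
have AB_inv : A *m B *m (invmx B *m invmx A) = 1%:M.
  by rewrite -mulmxA (mulmxA B) mulmxV // mul1mx mulmxV.
by rewrite -[RHS]mul1mx -(mulVmx uAB) -mulmxA AB_inv mulmx1.
Qed.

Lemma invmx_conj (U G : 'M[R]_k) : U \in unitmx ->
  invmx (invmx U *m G *m U) = invmx U *m invmx G *m U.
Proof.
move=> uU; have uUV : invmx U \in unitmx by rewrite unitmx_inv.
have [uG | nuG] := boolP (G \in unitmx).
  by rewrite !invmxM ?unitmx_mul ?uUV ?uG // invmxK mulmxA.
have nuC : invmx U *m G *m U \notin unitmx.
  by rewrite !unitmx_mul (negbTE nuG) andbF.
by rewrite (invmx_out nuC) (invmx_out (x := G)) ?inE.
Qed.

End MatrixInverse.

Lemma trmx_congr_inv (R : comUnitRingType) (n : nat) (phi psi e : 'M[R]_n) :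
  e \in unitmx -> phi = e^T *m psi *m e ->
  psi = (invmx e)^T *m phi *m invmx e.
Proof.
move=> ue ->; rewrite trmx_inv !mulmxA mulVmx ?unitmx_tr // mul1mx.
by rewrite mulmxK.
Qed.

Section Conjugation.
Variables (R : comUnitRingType) (n m : nat).
Variables (phi psi e : 'M[R]_n).
Hypotheses (unit_e : e \in unitmx) (unit_psi : psi \in unitmx).
Hypothesis phi_congr : phi = e^T *m psi *m e.

Lemma perpI_mul (a b : 'M[R]_n) : perpI m a *m perpI m b = perpI m (a *m b).
Proof.
by rewrite /perpI mulmx_block !mulmx0 !mul0mx !addr0 !add0r mulmx1.
Qed.

Lemma perpI_mulV : perpI m e *m perpI m (invmx e) = 1%:M.
Proof. by rewrite perpI_mul mulmxV // /perpI -scalar_mx_block. Qed.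

Lemma perpI_unit : perpI m e \in unitmx.
Proof. by case: (mulmx1_unit perpI_mulV). Qed.

Lemma invmx_perpI : invmx (perpI m e) = perpI m (invmx e).
Proof. by rewrite -[LHS]mulmx1 -perpI_mulV mulmxA mulVmx ?mul1mx ?perpI_unit. Qed.

Lemma perpI_conj_block (X : 'M[R]_(n, m + m)) (Y : 'M[R]_(m + m, n))
    (D : 'M[R]_(m + m)) :
  perpI m (invmx e) *m block_mx 1%:M X Y D *m perpI m e
  = block_mx 1%:M (invmx e *m X) (Y *m e) D.
Proof.
by rewrite /perpI !mulmx_block !mulmx0 !mul0mx !addr0 !add0r !mulmx1 !mul1mx mulVmx.
Qed.

Lemma adjQ_congr (A : 'M[R]_(m, n)) :
  adjQ phi (A *m e) = invmx e *m adjQ psi A.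
Proof.
have ueT : e^T \in unitmx by rewrite unitmx_tr.
rewrite phi_congr /adjQ !invmxM ?unitmx_mul ?ueT ?unit_psi // trmx_mul !mulmxA.
by rewrite -!(mulmxA _ (invmx e^T)) mulVmx // mulmx1.
Qed.

Lemma adjQ_congr_mul (A : 'M[R]_(m, n)) :
  A *m e *m adjQ phi (A *m e) = A *m adjQ psi A.
Proof. by rewrite adjQ_congr mulmxA mulmxK. Qed.

Lemma E_alpha_conj (A : 'M[R]_(m, n)) :
  perpI m (invmx e) *m E_alpha psi A *m perpI m e = E_alpha phi (A *m e).
Proof.
rewrite perpI_conj_block mul_mx_row mulmx0 mul_col_mx mul0mx.
by rewrite /E_alpha adjQ_congr_mul adjQ_congr mulmxN.
Qed.

Lemma E_beta_conj (B : 'M[R]_(m, n)) :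
  perpI m (invmx e) *m E_beta psi B *m perpI m e = E_beta phi (B *m e).
Proof.
rewrite perpI_conj_block mul_mx_row mulmx0 mul_col_mx mul0mx.
by rewrite /E_beta adjQ_congr_mul adjQ_congr mulmxN.
Qed.

Lemma DSER_gen_conj G :
  DSER_gen psi G -> DSER_gen phi (perpI m (invmx e) *m G *m perpI m e).
Proof.
case=> [[A ->] | [B ->]].
- by left; exists (A *m e); rewrite E_alpha_conj.
- by right; exists (B *m e); rewrite E_beta_conj.
Qed.

Lemma EO_conj M : EO psi M -> EO phi (perpI m (invmx e) *m M *m perpI m e).
Proof.
rewrite -invmx_perpI; set U := perpI m e.
have uU : U \in unitmx by exact: perpI_unit.
have conjM (G N : 'M[R]_(n + (m + m))) :
    invmx U *m (G *m N) *m U = (invmx U *m G *m U) *m (invmx U *m N *m U).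
  by rewrite !mulmxA mulmxK.
elim=> [|G N gen_G _ IH|G N gen_G _ IH].
- by rewrite mulmx1 mulVmx //; exact: EO_one.
- by rewrite conjM; apply: EO_mul IH; rewrite invmx_perpI; exact: DSER_gen_conj.
- rewrite conjM -invmx_conj //; apply: EO_mulV IH.
  by rewrite invmx_perpI; exact: DSER_gen_conj.
Qed.

End Conjugation.

Theorem mainTheorem13 (R : comUnitRingType) (n m : nat)
    (phi' phis eps : 'M[R]_n) :
  (2%:R : R) \is a GRing.unit ->
  phi' \in unitmx -> phi'^T = phi' ->
  phis \in unitmx -> phis^T = phis ->
  eps \in unitmx -> phi' = eps^T *m phis *m eps ->
  (0 < m)%N ->
  forall M : 'M[R]_(n + (m + m)),
    @EO R n m phi' M <->
    exists N, @EO R n m phis N /\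
      M = @perpI R n m (invmx eps) *m N *m @perpI R n m eps.
Proof.
move=> _ unit_phi' _ unit_phis _ unit_eps phi'_congr _ M.
have unit_epsV : invmx eps \in unitmx by rewrite unitmx_inv.
have phis_congr := trmx_congr_inv unit_eps phi'_congr.
split=> [EO_M | [N [EO_N ->]]]; last first.
  exact: (EO_conj unit_eps unit_phis phi'_congr EO_N).
exists (perpI m eps *m M *m perpI m (invmx eps)); split.
  by have := EO_conj unit_epsV unit_phi' phis_congr EO_M; rewrite invmxK.
rewrite -(invmx_perpI m unit_eps) !mulmxA mulVmx ?perpI_unit // mul1mx.
by rewrite mulmxKV ?perpI_unit.
Qed.
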